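(* Let $\pi$ be a probability measure on $\mathsf{X}$, and for each $x\in\mathsf{X}$ let $Q_{x}$ be the law of a random variable $W=\prod_{t=1}^{T}W_{t}$, where $W_{1},\dots,W_{T}$ are independent and nonnegative and each $W_{t}=\frac{1}{N}\sum_{i=1}^{N}W_{t,i}$ is an average of nonnegative, independent and identically distributed random variables $W_{t,1},\dots,W_{t,N}$ with mean $1$ (their laws may depend on $x$). Let $\tilde{\pi}_{x}(\mathrm{d}w):=wQ_{x}(\mathrm{d}w)$. Assume that for some integer $p\ge2$ and every $x\in\mathsf{X}$, $\max_{t\in\{1,\dots,T\}}\mathbb{E}[W_{t,1}^{p}]<\infty$. Then there exists a function $M_{p}:\mathsf{X}\to\mathbb{R}_{+}$ such that if \[ N\ge\alpha T+\tfrac{1}{2}+\sqrt{\alpha T} \] for some $\alpha>0$, then for all $s>0$, \[ \int\pi(\mathrm{d}x)\,\tilde{\pi}_{x}(W\ge s)\le s^{-p+1}\int\pi(\mathrm{d}x)\exp\Big(\frac{M_{p}(x)}{\alpha}\Big). \]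
   Context: $\mathbb{R}_{+}=(0,\infty)$. The expectation $\mathbb{E}[W_{t,1}^{p}]$ is under the law determined by $x$. *)

From HB Require Import structures.
From mathcomp Require Import all_boot all_order all_algebra.
From mathcomp Require Import all_classical all_reals all_analysis.
Set Implicit Arguments. Unset Strict Implicit. Unset Printing Implicit Defensive.
Import Order.TTheory GRing.Theory Num.Theory.
Local Open Scope classical_set_scope.
Local Open Scope ring_scope.

(* Mutual independence of a finite family of real random variables:
   product rule for every family of Borel sets (taking B i = setT for the
   indices left out gives the product rule for every finite subfamily). *)
Definition mutually_independent d (Omega : measurableType d) (R : realType)
  (I : finType) (P : probability Omega R) (Y : I -> Omega -> R) : Prop :=
  forall B : I -> set R, (forall i, measurable (B i)) ->
    P (\bigcap_(i in [set: I]) (Y i @^-1` B i)) =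
    (\prod_(i : I) fine (P (Y i @^-1` B i)))%:E.

Definition has_law d (Omega : measurableType d) (R : realType)
  (P : probability Omega R) (Y : Omega -> R) (mu : probability R R) : Prop :=
  forall B : set R, measurable B -> P (Y @^-1` B) = mu B.

Definition Wprod (R : realType) (Omega : Type) (T N : nat)
  (W : 'I_T -> 'I_N -> Omega -> R) (w : Omega) : R :=
  \prod_(t < T) ((N%:R)^-1 * \sum_(i < N) W t i w).

(* tilde pi_x (W >= s) = int_{w >= s} w Q_x(dw) = E[W 1{W >= s}] *)
Definition tilted_tail d (Omega : measurableType d) (R : realType)
  (P : probability Omega R) (Wv : Omega -> R) (s : R) : \bar R :=
  (\int[P]_(w in [set w | (s <= Wv w)%R]) (Wv w)%:E)%E.

From HB Require Import structures.
From mathcomp Require Import all_boot all_order all_algebra.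
From mathcomp Require Import all_classical all_reals all_analysis.
From mathcomp Require Import ring zify measurable_realfun.
Import Order.TTheory GRing.Theory Num.Theory.
Import numFieldTopology.Exports.
Local Open Scope classical_set_scope.
Local Open Scope ring_scope.

(* On the event {W >= s} one has W <= s^(1-p) |W|^p, so the tilted tail is at
   most s^(1-p) E[(prod_t N^-1 sum_i |W_t,i|)^p].  Expanding each p-th power as
   a sum over the maps f : [0,p) -> [0,N) and using independence, every term is
   at most a product of absolute moments c_t(m) whose orders m = |f^-1(i)| sum
   to p.  Since c_t(0) = c_t(1) = 1, injective maps contribute 1 and the at most
   p^2 N^(p-1) other ones contribute at most B^p, where B = 1 + sum_t c_t(p).
   Hence the p-th moment is at most (1 + B^p p^2 / N)^T <= exp(T B^p p^2 / N),
   and T / N <= 1 / alpha.  Independence is used as E[prod_i phi_i(Y_i)] <=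
   prod_i E[phi_i(Y_i)] for nonnegative phi_i: for staircase approximations of
   the phi_i from below this is the product rule for the events {Y_i in A},
   and Fatou's lemma passes to the limit. *)

Section fiber_card.
Context {p N : nat}.
Implicit Type f : {ffun 'I_p -> 'I_N}.

Definition fiber_card f (i : 'I_N) : nat := #|[set j | f j == i]%SET|.

Lemma sum_fiber_card f : (\sum_i fiber_card f i)%N = p.
Proof.
rewrite /fiber_card -[RHS]card_ord -sum1_card.
rewrite (partition_big (fun j => f j) xpredT) //=.
by apply: eq_bigr => i _; rewrite -sum1_card; apply: eq_bigl => j /=; rewrite inE.
Qed.

Lemma fiber_card_le f i : (fiber_card f i <= p)%N.
Proof. by rewrite -[p]card_ord max_card. Qed.

Lemma fiber_card_le1 f i : injectiveb f -> (fiber_card f i <= 1)%N.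
Proof.
move=> /injectiveP f_inj; apply/card_le1_eqP => j k.
by rewrite !inE => /eqP fj /eqP fk; apply: f_inj; rewrite fj fk.
Qed.

Lemma prod_fiber_card (R : comPzSemiRingType) (a : 'I_N -> R) f :
  \prod_(j < p) a (f j) = \prod_i a i ^+ fiber_card f i.
Proof.
rewrite (partition_big (fun j => f j) xpredT) //=; apply: eq_bigr => i _.
by rewrite -prodr_const; apply: eq_big => [j|j /eqP ->]; rewrite ?inE.
Qed.

Lemma exprn_sum_fiber_card (R : comPzSemiRingType) (a : 'I_N -> R) :
  (\sum_i a i) ^+ p = \sum_f \prod_i a i ^+ fiber_card f i.
Proof.
rewrite -[in LHS](card_ord p) -prodr_const bigA_distr_bigA.
by apply: eq_bigr => f _; exact: prod_fiber_card.
Qed.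

End fiber_card.

Lemma ffact_leq_expn N p : (N ^_ p <= N ^ p)%N.
Proof. by elim: p => // p IH; rewrite ffactnSr expnSr leq_mul ?leq_subr. Qed.

Lemma expn_le_ffact_add N p : (N * N ^ p <= N * N ^_ p + p ^ 2 * N ^ p)%N.
Proof.
elim: p => [|p IH]; first by rewrite ffactn0 expn0 leq_addr.
rewrite ffactnSr expnSr; have := ffact_leq_expn N p.
move: IH; set x := (N ^ p)%N; set y := (N ^_ p)%N => IH yx.
have := leq_mul (leqnn N) IH; have := leq_mul (leqnn (N * p)) yx.
case: (leqP p N) => pN; nia.
Qed.

Lemma card_noninj_ffun p N :
  (N * #|[pred f : {ffun 'I_p -> 'I_N} | ~~ injectiveb f]| <= p ^ 2 * N ^ p)%N.
Proof.
have := cardC [set f : {ffun 'I_p -> 'I_N} | injectiveb f]%SET.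
rewrite card_inj_ffuns card_ffun !card_ord.
have -> : #|[predC [set f : {ffun 'I_p -> 'I_N} | injectiveb f]%SET]| =
          #|[pred f : {ffun 'I_p -> 'I_N} | ~~ injectiveb f]|.
  by apply: eq_card => f; rewrite !inE.
have := expn_le_ffact_add N p; nia.
Qed.

Section moment_sum.
Context {R : realFieldType} {p N : nat} {B : R} {c : nat -> R}.
Hypotheses (B_ge1 : 1 <= B) (c0 : c 0%N = 1) (c1 : c 1%N = 1).
Hypothesis c_bound : forall m, (m <= p)%N -> 0 <= c m <= B ^+ m.

Lemma prod_moment_fiber_le (f : {ffun 'I_p -> 'I_N}) :
  \prod_i c (fiber_card f i) <= 1 + (~~ injectiveb f)%:R * B ^+ p.
Proof.
case: (boolP (injectiveb f)) => f_inj /=.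
  rewrite mul0r addr0 big1 // => i _.
  by case: (fiber_card f i) (fiber_card_le1 f i f_inj) => [|[]].
rewrite mul1r; apply: le_trans (_ : \prod_i B ^+ fiber_card f i <= _).
  by apply: ler_prod => i _; apply: c_bound; exact: fiber_card_le.
by rewrite prodrXr sum_fiber_card lerDr.
Qed.

Lemma moment_sum_le : (0 < N)%N ->
  N%:R^-1 ^+ p * \sum_(f : {ffun 'I_p -> 'I_N}) \prod_i c (fiber_card f i)
    <= 1 + B ^+ p * p%:R ^+ 2 / N%:R.
Proof.
move=> N_gt0.
have n_gt0 : 0 < N%:R :> R by rewrite ltr0n.
have B_ge0 : 0 <= B by apply: le_trans B_ge1.
set a := #|[pred f : {ffun 'I_p -> 'I_N} | ~~ injectiveb f]|.
have sum_le : \sum_(f : {ffun 'I_p -> 'I_N}) \prod_i c (fiber_card f i)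
    <= N%:R ^+ p + a%:R * B ^+ p.
  apply: le_trans (ler_sum _ (fun f _ => prod_moment_fiber_le f)) _.
  rewrite big_split /= sumr_const card_ffun !card_ord -mulr_suml -natr_sum natrX.
  by rewrite /a -sum1_card [in X in _ <= X]big_mkcond.
have a_le : a%:R <= p%:R ^+ 2 * N%:R ^+ p / N%:R :> R.
  by rewrite ler_pdivlMr // mulrC -!natrX -!natrM ler_nat card_noninj_ffun.
rewrite exprVn ler_pdivrMl ?exprn_gt0 //; apply: le_trans sum_le _.
rewrite mulrDr mulr1 lerD2l.
have -> : N%:R ^+ p * (B ^+ p * p%:R ^+ 2 / N%:R) =
          p%:R ^+ 2 * N%:R ^+ p / N%:R * B ^+ p by ring.
by rewrite ler_wpM2r ?exprn_ge0.
Qed.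

End moment_sum.

Lemma sum_ler_truncnE (R : archiFieldType) (L : nat) (y : R) :
  \sum_(j < L) (j.+1%:R <= y)%R%:R = (minn L (Num.truncn y))%:R :> R.
Proof.
elim: L => [|L IH]; first by rewrite big_ord0 min0n.
rewrite big_ord_recr /= IH -truncn_gt_nat -natrD; congr _%:R.
case: (ltnP L (Num.truncn y)) => h /=; lia.
Qed.

Section stair.
Context {R : archiFieldType}.
Implicit Types (n : nat) (v : R).

(* [stair n v] is [v] rounded down to the grid [(n+1)^-1 N], capped at [n+1]. *)
Definition stair n v : R :=
  n.+1%:R^-1 * \sum_(j < n.+1 * n.+1) (j.+1%:R <= n.+1%:R * v)%R%:R.

Lemma stair_ge0 n v : 0 <= stair n v.
Proof. by rewrite /stair sum_ler_truncnE mulr_ge0 ?invr_ge0. Qed.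

Lemma stair_le n v : 0 <= v -> stair n v <= v.
Proof.
move=> v_ge0; rewrite /stair sum_ler_truncnE ler_pdivrMl ?ltr0Sn //.
apply: le_trans (_ : (Num.truncn (n.+1%:R * v))%:R <= _).
  by rewrite ler_nat geq_minr.
by rewrite truncn_le mulr_ge0.
Qed.

Lemma stair_ge n v : v <= n.+1%:R -> v - n.+1%:R^-1 <= stair n v.
Proof.
move=> v_le; rewrite /stair sum_ler_truncnE.
have n_gt0 : 0 < n.+1%:R :> R by rewrite ltr0Sn.
have -> : minn (n.+1 * n.+1) (Num.truncn (n.+1%:R * v)) =
          Num.truncn (n.+1%:R * v).
  apply/minn_idPr; rewrite truncn_le_nat.
  apply: le_lt_trans (_ : _ <= (n.+1 * n.+1)%:R) _; last by rewrite ltr_nat.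
  by rewrite natrM ler_pM2l.
rewrite -(ler_pM2l n_gt0) mulrA mulfV ?gt_eqF // mul1r mulrBr mulfV ?gt_eqF //.
by rewrite lerBlDr natr1 ltW // truncnS_gt.
Qed.

End stair.

Lemma cvg_stair (R : realType) (v : R) : 0 <= v -> stair n v @[n --> \oo] --> v.
Proof.
move=> v_ge0.
apply: (@squeeze_cvgr _ _ _ _ (fun n => v - n.+1%:R^-1) (fun _ => v)).
- near=> n; rewrite stair_le // andbT; apply: stair_ge.
  apply: le_trans (_ : n%:R <= _); last by rewrite ler_nat.
  near: n; exact: nbhs_infty_ger.
- rewrite -[X in _ --> X]subr0; apply: cvgB; [exact: cvg_cst|exact: cvg_harmonic].
- exact: cvg_cst.
Unshelve. all: by end_near. Qed.

Section stair_measurable.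
Context {R : realType}.

Definition stair_level n j : set R := [set u | (j.+1%:R <= n.+1%:R * u)%R].

Lemma measurable_stair_level n j : measurable (stair_level n j).
Proof.
have -> : stair_level n j = `[j.+1%:R / n.+1%:R, +oo[%classic.
  apply/seteqP; split => u; rewrite /= in_itv /= andbT ler_pdivrMr ?ltr0Sn //;
  by rewrite mulrC.
exact: measurable_itv.
Qed.

Lemma stair_indicE n v :
  stair n v = \sum_(j < n.+1 * n.+1) n.+1%:R^-1 * \1_(stair_level n j) v.
Proof.
rewrite /stair mulr_sumr; apply: eq_bigr => j _.
rewrite indicE; congr (_ * (nat_of_bool _)%:R).
by apply/idP/idP => [/mem_set|/set_mem].
Qed.

Lemma measurable_stair n : measurable_fun setT (@stair R n).
Proof.
rewrite (_ : stair n =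
    fun v => \sum_(j < n.+1 * n.+1) n.+1%:R^-1 * \1_(stair_level n j) v).
  apply: measurable_sum => j; apply: measurable_funM; first exact: measurable_cst.
  exact: measurable_indic (measurable_stair_level n j).
by apply/funext => v; rewrite stair_indicE.
Qed.

End stair_measurable.

Lemma exprn_le_1Dexprn (R : realDomainType) (x : R) k p :
  0 <= x -> (k <= p)%N -> x ^+ k <= 1 + x ^+ p.
Proof.
move=> x_ge0 kp; case: (lerP x 1) => [x_le1|x_gt1].
  by apply: le_trans (_ : 1 <= _); [rewrite exprn_ile1|rewrite lerDl exprn_ge0].
apply: le_trans (_ : x ^+ p <= _); last by rewrite lerDr.
by rewrite -(subnKC kp) exprD ler_peMr ?exprn_ge0 // exprn_ege1 // ltW.
Qed.

Lemma tail_le_pow (R : realFieldType) (q : nat) (s v Z : R) :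
  0 < s -> s <= v -> v <= Z -> v <= s ^- q * Z ^+ q.+1.
Proof.
move=> s_gt0 sv vZ; have v_gt0 : 0 < v by apply: lt_le_trans sv.
rewrite ler_pdivlMl ?exprn_gt0 //; apply: le_trans (_ : v ^+ q.+1 <= _).
  rewrite exprSr; apply: ler_wpM2r; first exact: ltW.
  by apply: lerXn2r; rewrite ?nnegrE ?(ltW s_gt0) ?(ltW v_gt0).
by apply: lerXn2r; rewrite ?nnegrE ?(ltW v_gt0) ?(le_trans (ltW v_gt0) vZ).
Qed.

Lemma exprn_prod_avg (R : comPzRingType) (T N p : nat) (a : R)
    (x : 'I_T -> 'I_N -> R) :
  (\prod_t (a * \sum_i x t i)) ^+ p =
  \sum_(F : {ffun 'I_T -> {ffun 'I_p -> 'I_N}})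
    \prod_t (a ^+ p * \prod_i x t i ^+ fiber_card (F t) i).
Proof.
rewrite -prodrXl; under eq_bigr do rewrite exprMn exprn_sum_fiber_card mulr_sumr.
by rewrite bigA_distr_bigA.
Qed.

Lemma Wprod_norm_le {R : realType} {Omega : Type} {T N : nat}
    (W : 'I_T -> 'I_N -> Omega -> R) w :
  `|Wprod W w| <= \prod_t (N%:R^-1 * \sum_i `|W t i w|).
Proof.
rewrite /Wprod normr_prod; apply: ler_prod => t _; rewrite normr_ge0 /=.
by rewrite normrM ger0_norm ?invr_ge0 // ler_wpM2l ?invr_ge0 // ler_norm_sum.
Qed.

Lemma exprn_1Ddiv_le_expR (R : realType) (M alpha : R) (T N : nat) :
  0 <= M -> 0 < alpha -> alpha * T%:R <= N%:R ->
  (1 + M / N%:R) ^+ T <= expR (M / alpha).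
Proof.
move=> M_ge0 alpha_gt0 aTN.
apply: le_trans (_ : expR (M / N%:R) ^+ T <= _).
  by apply: lerXn2r; rewrite ?nnegrE ?addr_ge0 ?divr_ge0 ?expR_ge0 ?expR_ge1Dx.
rewrite -expRM_natl ler_expR mulrCA ler_wpM2l //.
have [->|N_gt0] := posnP N; first by rewrite invr0 mulr0 invr_ge0 ltW.
by rewrite ler_pdivrMr ?ltr0n // ler_pdivlMl.
Qed.

Lemma prod_indic (R : realType) (T : Type) (I : finType) (B : I -> set T) w :
  \prod_i \1_(B i) w = \1_(\bigcap_(i in [set: I]) B i) w :> R.
Proof.
rewrite indicE.
case: (boolP (w \in \bigcap_(i in [set: I]) B i)) => [/set_mem Bw|nBw].
  by rewrite big1 // => i _; rewrite indicE mem_set //; exact: Bw.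
have [i nBiw] : exists i, ~ B i w.
  by apply/existsNP => Bw; move/negP: nBw; apply; apply/mem_set => i _.
by rewrite (bigD1 i) //= indicE memNset // mul0r.
Qed.

Local Open Scope ereal_scope.

Section ge0_le_integralZl_nonmeasurable.
Import HBNNSimple.

(* Nonnegative integrals are suprema over simple functions below the integrand,
   so no measurability is needed; the integrands in x of the theorem are not
   known to be measurable. *)
Lemma ge0_le_integralZl_nonmeasurable d (T : measurableType d) (R : realType)
    (mu : {measure set T -> \bar R}) (f g : T -> \bar R) (c : R) :
  (0 < c)%R -> (forall x, 0 <= f x) -> (forall x, 0 <= g x) ->
  (forall x, f x <= c%:E * g x) ->
  \int[mu]_x f x <= c%:E * \int[mu]_x g x.
Proof.
move=> c_gt0 f_ge0 g_ge0 fg; rewrite !ge0_integralTE //=.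
apply: ge_ereal_sup => _ [h /= hf <-].
have cV_ge0 : (0 <= c^-1)%R by rewrite invr_ge0 ltW.
pose h' := scale_nnsfun h cV_ge0.
have -> : sintegral mu h = sintegral mu (cst c \* h')%R.
  by apply: eq_sintegral => x /=; rewrite mulrA mulfV ?mul1r ?gt_eqF.
rewrite sintegralrM; apply: lee_wpmul2l; first by rewrite lee_fin ltW.
apply: ereal_sup_ubound; exists h' => //= x.
have := le_trans (hf x) (fg x).
case: (g x) (g_ge0 x) => [r| |] //= r_ge0; last by rewrite leey.
by rewrite !lee_fin => hx; rewrite ler_pdivrMl.
Qed.

End ge0_le_integralZl_nonmeasurable.

Lemma integral_sum_indic d (T : measurableType d) (R : realType)
    (mu : {finite_measure set T -> \bar R}) (K : finType) (a : K -> R)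
    (B : K -> set T) :
  (forall k, 0 <= a k)%R -> (forall k, measurable (B k)) ->
  \int[mu]_w (\sum_k a k * \1_(B k) w)%:E = (\sum_k a k * fine (mu (B k)))%:E.
Proof.
move=> a_ge0 mB; under eq_integral do rewrite -sumEFin.
rewrite ge0_integral_sum //; last 2 first.
- move=> k; apply/measurable_EFinP/measurable_funM; first exact: measurable_cst.
  exact: measurable_indic.
- by move=> k w _; rewrite lee_fin mulr_ge0.
rewrite -sumEFin; apply: eq_bigr => k _; under eq_integral do rewrite EFinM.
rewrite ge0_integralZl_EFin //; last exact/measurable_EFinP/measurable_indic.
by rewrite integral_indic // setIT EFinM fineK ?fin_num_measure.
Qed.

Section independent_product.
Context {d : measure_display} {Omega : measurableType d} {R : realType}.
Context {I : finType}.
Variables (P : probability Omega R) (Y : I -> Omega -> R).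
Hypotheses (mY : forall i, measurable_fun setT (Y i))
  (indY : mutually_independent P Y).

Lemma integral_prod_simple (K : finType) (a : I -> K -> R)
    (A : I -> K -> set R) :
  (forall i k, 0 <= a i k)%R -> (forall i k, measurable (A i k)) ->
  \int[P]_w (\prod_i \sum_k a i k * \1_(Y i @^-1` A i k) w)%:E =
  (\prod_i \sum_k a i k * fine (P (Y i @^-1` A i k)))%:E.
Proof.
move=> a_ge0 mA.
have mYA i k : measurable (Y i @^-1` A i k).
  by rewrite -[X in measurable X]setTI; exact: mY.
pose S (J : {ffun I -> K}) := \bigcap_(i in [set: I]) Y i @^-1` A i (J i).
have expand w : (\prod_i \sum_k a i k * \1_(Y i @^-1` A i k) w =
    \sum_(J : {ffun I -> K}) (\prod_i a i (J i)) * \1_(S J) w)%R.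
  rewrite bigA_distr_bigA; apply: eq_bigr => J _.
  by rewrite big_split /= prod_indic.
under eq_integral do rewrite expand.
rewrite integral_sum_indic; last 2 first.
- by move=> J; apply: prodr_ge0.
- by move=> J; apply: fin_bigcap_measurable => //; exact: finite_finset.
rewrite bigA_distr_bigA; congr EFin; apply: eq_bigr => J _.
by rewrite big_split /= indY.
Qed.

Lemma integral_prod_le (phi : I -> R -> R) (c : I -> R) :
  (forall i, measurable_fun setT (phi i)) -> (forall i y, 0 <= phi i y)%R ->
  (forall i, \int[P]_w (phi i (Y i w))%:E = (c i)%:E) ->
  \int[P]_w (\prod_i phi i (Y i w))%:E <= (\prod_i c i)%:E.
Proof.
move=> mphi phi_ge0 Ec.
have mphiY i : measurable_fun setT (phi i \o Y i) by exact: measurableT_comp.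
pose F n w := (\prod_i stair n (phi i (Y i w)))%R.
have mF n : measurable_fun setT (fun w => (F n w)%:E).
  apply/measurable_EFinP/measurable_prod => i _.
  exact: measurableT_comp (measurable_stair n) (mphiY i).
have F_ge0 n w : (0 <= F n w)%R by apply: prodr_ge0 => i _; exact: stair_ge0.
pose A n i j := Y i @^-1` (phi i @^-1` stair_level n j).
pose e n i := (\sum_(j < n.+1 * n.+1) n.+1%:R^-1 * fine (P (A n i j)))%R.
have stairE n i w : stair n (phi i (Y i w)) =
    (\sum_(j < n.+1 * n.+1) n.+1%:R^-1 * \1_(A n i j) w)%R.
  exact: stair_indicE.
have mlevel n i j : measurable (phi i @^-1` stair_level n j).
  rewrite -[X in measurable X]setTI.
  by apply: mphi => //; exact: measurable_stair_level.
have EF n : \int[P]_w (F n w)%:E = (\prod_i e n i)%:E.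
  rewrite /F; under eq_integral do under eq_bigr do rewrite stairE.
  by rewrite integral_prod_simple.
have Estair n i : \int[P]_w (stair n (phi i (Y i w)))%:E = (e n i)%:E.
  under eq_integral do rewrite stairE.
  rewrite integral_sum_indic // => j.
  by rewrite -[X in measurable X]setTI; exact: mY.
have e_ge0 n i : (0 <= e n i)%R.
  by apply: sumr_ge0 => j _; rewrite mulr_ge0 ?invr_ge0 // fine_ge0.
have e_le n i : (e n i <= c i)%R.
  rewrite -lee_fin -Ec -Estair; apply: ge0_le_integral => //.
  - by move=> w _; rewrite lee_fin; exact: stair_ge0.
  - apply/measurable_EFinP.
    exact: measurableT_comp (measurable_stair n) (mphiY i).
  - exact/measurable_EFinP/mphiY.
  - by move=> w _; rewrite lee_fin; exact: stair_le.
have F_cvg w : F n w @[n --> \oo] --> (\prod_i phi i (Y i w))%R.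
  by apply: cvg_big => [|i _]; [exact: mul_continuous|exact: cvg_stair].
rewrite (eq_integral (fun w => limn_einf (fun n => (F n w)%:E))); last first.
  move=> w _; apply/esym/(cvg_limn_einf_sup _).1.
  by apply: cvg_EFin; [near=> n | exact: F_cvg].
apply: le_trans (fatou _ _ _ _) _ => //; first by move=> n w _; rewrite lee_fin.
rewrite limn_einf_lim; apply: lime_le; first exact: is_cvg_einfs.
near=> n; apply: le_trans (_ : _ <= \int[P]_w (F n w)%:E) _.
  by apply: ereal_inf_lbound; exists n => /=.
by rewrite EF lee_fin; apply: ler_prod => i _; rewrite e_ge0 e_le.
Unshelve. all: by end_near. Qed.

End independent_product.

Lemma integral_has_law {d} {Omega : measurableType d} {R : realType}
    {P : probability Omega R} {Y : Omega -> R} {mu : probability R R}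
    (f : R -> \bar R) :
  measurable_fun setT Y -> has_law P Y mu -> measurable_fun setT f ->
  (forall y, 0 <= f y) -> \int[P]_w f (Y w) = \int[mu]_y f y.
Proof.
move=> mY lawY mf f_ge0.
rewrite -[in LHS](preimage_setT Y) -(ge0_integral_pushforward mY) //.
by apply: eq_measure_integral => A mA _; exact: lawY.
Qed.

Lemma measurable_normrX (R : realType) m :
  measurable_fun setT (fun y : R => (`|y| ^+ m)%:E).
Proof.
by apply/measurable_EFinP; apply: measurable_funX; exact: normr_measurable.
Qed.

Definition abs_moment {R : realType} (mu : probability R R) (m : nat) : R :=
  fine (\int[mu]_y (`|y| ^+ m)%:E).

Section absolute_moments.
Context {R : realType} {mu : probability R R}.

Lemma abs_moment_ge0 m : (0 <= abs_moment mu m)%R.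
Proof. by apply/fine_ge0/integral_ge0 => y _; rewrite lee_fin. Qed.

Lemma abs_moment0 : abs_moment mu 0 = 1%R.
Proof.
rewrite /abs_moment; under eq_integral do rewrite expr0.
by rewrite integral_cst // mul1e; exact: (congr1 fine (probability_setT mu)).
Qed.

Hypothesis mu_ge0 : mu [set y | (0 <= y)%R] = 1.

Lemma eq_integral_nonneg (f g : R -> \bar R) :
  measurable_fun setT f -> measurable_fun setT g ->
  (forall y, (0 <= y)%R -> f y = g y) -> \int[mu]_y f y = \int[mu]_y g y.
Proof.
move=> mf mg fg; apply: ae_eq_integral => //.
have mD : measurable [set y : R | (0 <= y)%R].
  rewrite (_ : [set y | _] = `[0%R, +oo[%classic); first exact: measurable_itv.
  by apply/seteqP; split=> y; rewrite /= in_itv /= andbT.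
exists (~` [set y : R | (0 <= y)%R]); split; first exact: measurableC.
  by have := probability_setC mu mD; rewrite mu_ge0 subee.
by move=> y /= nfg y_ge0; apply: nfg => _; exact: fg.
Qed.

Lemma abs_moment1 : \int[mu]_y y%:E = 1 -> abs_moment mu 1 = 1%R.
Proof.
move=> mean1.
rewrite /abs_moment (@eq_integral_nonneg _ (fun y => y%:E)) ?mean1 //.
- exact: measurable_normrX.
- exact/measurable_EFinP.
- by move=> y y_ge0; rewrite expr1 ger0_norm.
Qed.

Context {p : nat}.
Hypothesis mu_moment : \int[mu]_y (y ^+ p)%:E < +oo.

Let integral_abs_pow_le m : (m <= p)%N ->
  \int[mu]_y (`|y| ^+ m)%:E <= 1 + \int[mu]_y (`|y| ^+ p)%:E.
Proof.
move=> m_le; apply: le_trans (_ : _ <= \int[mu]_y (1 + `|y| ^+ p)%:E) _.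
  apply: ge0_le_integral => //.
  - exact: measurable_normrX.
  - apply/measurable_EFinP/measurable_funD; first exact: measurable_cst.
    by apply: measurable_funX; exact: normr_measurable.
  - by move=> y _; rewrite lee_fin exprn_le_1Dexprn.
under eq_integral do rewrite EFinD.
rewrite ge0_integralD //; last exact: measurable_normrX.
by rewrite leeD2r // integral_cst // mul1e; exact: probability_le1.
Qed.

Let integral_abs_pow_fin m : (m <= p)%N ->
  \int[mu]_y (`|y| ^+ m)%:E \is a fin_num.
Proof.
have fin_p : \int[mu]_y (`|y| ^+ p)%:E \is a fin_num.
  rewrite ge0_fin_numE ?integral_ge0 //.
  rewrite (@eq_integral_nonneg _ (fun y => (y ^+ p)%:E)) //.
  - exact: measurable_normrX.
  - exact/measurable_EFinP/measurable_funX.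
  - by move=> y y_ge0; rewrite ger0_norm.
move=> m_le; rewrite ge0_fin_numE ?integral_ge0 //.
apply: le_lt_trans (integral_abs_pow_le _ m_le) _.
by rewrite -(fineK fin_p) -EFinD ltry.
Qed.

Lemma integral_abs_moment m : (m <= p)%N ->
  \int[mu]_y (`|y| ^+ m)%:E = (abs_moment mu m)%:E.
Proof. by move=> m_le; rewrite /abs_moment fineK ?integral_abs_pow_fin. Qed.

Lemma abs_moment_le_exprn (B : R) m :
  (1 + abs_moment mu p <= B)%R -> (m <= p)%N -> (abs_moment mu m <= B ^+ m)%R.
Proof.
move=> B_ge; case: m => [_|m m_le]; first by rewrite abs_moment0 expr0.
have B_ge1 : (1 <= B)%R by apply: le_trans B_ge; rewrite lerDl abs_moment_ge0.
have le_1Dp : (abs_moment mu m.+1 <= 1 + abs_moment mu p)%R.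
  by rewrite -lee_fin EFinD -!integral_abs_moment // integral_abs_pow_le.
apply: le_trans le_1Dp _; apply: le_trans B_ge _.
by rewrite exprS ler_peMr ?exprn_ege1 // (le_trans ler01).
Qed.

End absolute_moments.

Lemma tilted_tail_le_moment {d} {Omega : measurableType d} {R : realType}
    (P : probability Omega R) (Wv G : Omega -> R) (s : R) (q : nat) :
  (0 < s)%R -> measurable_fun setT Wv -> measurable_fun setT G ->
  (forall w, `|Wv w| <= G w)%R ->
  tilted_tail P Wv s <= (s ^- q)%:E * \int[P]_w (G w ^+ q.+1)%:E.
Proof.
move=> s_gt0 mWv mG Wv_le.
have G_ge0 w : (0 <= G w)%R by apply: le_trans (Wv_le w).
have mGp : measurable_fun setT (fun w => (s ^- q * G w ^+ q.+1)%:E).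
  apply/measurable_EFinP/measurable_funM; first exact: measurable_cst.
  exact: measurable_funX.
have mtail : measurable [set w | (s <= Wv w)%R].
  rewrite (_ : [set w | _] = Wv @^-1` `[s, +oo[%classic).
    rewrite -[X in measurable X]setTI.
    by apply: mWv => //; exact: measurable_itv.
  by apply/seteqP; split=> w; rewrite /= in_itv /= andbT.
have sq_ge0 : (0 <= s ^- q)%R by rewrite invr_ge0 exprn_ge0 ?ltW.
apply: (@le_trans _ _
    (\int[P]_(w in [set w | (s <= Wv w)%R]) (s ^- q * G w ^+ q.+1)%:E)).
  apply: ge0_le_integral => //.
  - by move=> w /= sw; rewrite lee_fin (le_trans (ltW s_gt0)).
  - exact/measurable_EFinP/measurable_funTS.
  - exact: measurable_funTS.
  - move=> w /= sw; rewrite lee_fin; apply: tail_le_pow => //.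
    exact: le_trans (ler_norm _) (Wv_le w).
apply: le_trans (ge0_subset_integral _ _ _ _ _ (subsetT _)) _ => //.
  by move=> w _; rewrite lee_fin mulr_ge0 ?exprn_ge0.
under eq_integral do rewrite EFinM.
rewrite ge0_integralZl_EFin //.
  by move=> w _; rewrite lee_fin exprn_ge0.
by apply/measurable_EFinP; exact: measurable_funX.
Qed.

Section moments_of_product_of_averages.
Context {d : measure_display} {Omega : measurableType d} {R : realType}.
Context {T N p : nat} {P : probability Omega R}.
Context {W : 'I_T -> 'I_N -> Omega -> R}.
Context {c : 'I_T -> nat -> R} {B : R}.
Hypotheses (mW : forall t i, measurable_fun setT (W t i))
  (indW : mutually_independent P (fun ti : 'I_T * 'I_N => W ti.1 ti.2)).
Hypothesis W_moment : forall t i m, (m <= p)%N ->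
  \int[P]_w (`|W t i w| ^+ m)%:E = (c t m)%:E.

Lemma integral_prod_moments_le (a : R) (m : 'I_T -> 'I_N -> nat) :
  (0 <= a)%R -> (forall t i, m t i <= p)%N ->
  \int[P]_w (\prod_t (a * \prod_i `|W t i w| ^+ m t i))%:E <=
  (\prod_t (a * \prod_i c t (m t i)))%:E.
Proof.
move=> a_ge0 m_le.
rewrite [X in _ <= X%:E]big_split /=.
under eq_integral do rewrite big_split /= pair_big /= EFinM.
rewrite ge0_integralZl_EFin ?prodr_ge0 //; first last.
- apply/measurable_EFinP/measurable_prod => ti _; apply: measurable_funX.
  exact: measurableT_comp (mW _ _).
- by move=> w _; rewrite lee_fin prodr_ge0 // => ti _; rewrite exprn_ge0.
rewrite EFinM; apply: lee_wpmul2l; first by rewrite lee_fin prodr_ge0.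
rewrite pair_big /=.
apply: (integral_prod_le P (fun ti => W ti.1 ti.2) (fun ti => mW ti.1 ti.2) indW
  (fun ti y => `|y| ^+ m ti.1 ti.2)%R (fun ti => c ti.1 (m ti.1 ti.2))) => //.
- by move=> ti; apply: measurable_funX; exact: normr_measurable.
- by move=> ti; exact: W_moment (m_le _ _).
Qed.

Hypotheses (B_ge1 : (1 <= B)%R) (c0 : forall t, c t 0%N = 1%R)
  (c1 : forall t, c t 1%N = 1%R)
  (c_bound : forall t m, (m <= p)%N -> (0 <= c t m <= B ^+ m)%R).

Lemma moment_prod_avg_le : (0 < N)%N ->
  \int[P]_w ((\prod_t (N%:R^-1 * \sum_i `|W t i w|)) ^+ p)%:E <=
  ((1 + B ^+ p * p%:R ^+ 2 / N%:R) ^+ T)%:E.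
Proof.
move=> N_gt0.
have a_ge0 : (0 <= N%:R^-1 ^+ p :> R)%R by rewrite exprn_ge0 // invr_ge0.
under eq_integral do rewrite exprn_prod_avg -sumEFin.
rewrite ge0_integral_sum //; first last.
- move=> F w _; rewrite lee_fin prodr_ge0 // => t _.
  by rewrite mulr_ge0 // prodr_ge0 // => i _; rewrite exprn_ge0.
- move=> F; apply/measurable_EFinP/measurable_prod => t _.
  apply: measurable_funM; first exact: measurable_cst.
  apply: measurable_prod => i _; apply: measurable_funX.
  exact: measurableT_comp (mW _ _).
apply: (@le_trans _ _ (\sum_(F : {ffun 'I_T -> {ffun 'I_p -> 'I_N}})
    (\prod_t (N%:R^-1 ^+ p * \prod_i c t (fiber_card (F t) i)))%:E)).
  apply: lee_sum => F _; apply: integral_prod_moments_le => // t i.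
  exact: fiber_card_le.
rewrite sumEFin lee_fin -(bigA_distr_bigA (fun t f =>
  N%:R^-1 ^+ p * \prod_i c t (fiber_card f i)))%R.
rewrite -[in X in (_ <= X)%R](card_ord T) -prodr_const.
apply: ler_prod => t _; rewrite -mulr_sumr; apply/andP; split.
  rewrite mulr_ge0 // sumr_ge0 // => f _; rewrite prodr_ge0 // => i _.
  by case/andP: (c_bound t _ (fiber_card_le f i)).
exact: (moment_sum_le B_ge1 (c0 t) (c1 t) (c_bound t) N_gt0).
Qed.

Lemma tilted_tail_Wprod_le (s : R) : (0 < p)%N -> (0 < N)%N -> (0 < s)%R ->
  tilted_tail P (Wprod W) s <=
  (s ^- p.-1)%:E * ((1 + B ^+ p * p%:R ^+ 2 / N%:R) ^+ T)%:E.
Proof.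
move=> p_gt0 N_gt0 s_gt0.
have mavg t : measurable_fun setT (fun w => N%:R^-1 * \sum_i W t i w)%R.
  by apply: measurable_funM; [exact: measurable_cst|exact: measurable_sum].
have mavg_abs t : measurable_fun setT (fun w => N%:R^-1 * \sum_i `|W t i w|)%R.
  apply: measurable_funM; first exact: measurable_cst.
  by apply: measurable_sum => i; exact: measurableT_comp (mW t i).
apply: le_trans (tilted_tail_le_moment P _ _ _ p.-1 s_gt0 _ _ (Wprod_norm_le W)) _.
- by apply: measurable_prod => t _; exact: mavg.
- by apply: measurable_prod => t _; exact: mavg_abs.
rewrite prednK //; apply: lee_wpmul2l.
  by rewrite lee_fin invr_ge0 exprn_ge0 ?ltW.
exact: moment_prod_avg_le.
Qed.

End moments_of_product_of_averages.

Local Close Scope ereal_scope.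

Theorem proposition49 (R : realType) (dX : measure_display)
  (X : measurableType dX) (pi : probability X R) (T p : nat)
  (mu : X -> 'I_T -> probability R R) :
  (0 < T)%N -> (2 <= p)%N ->
  (forall x t, mu x t [set y : R | 0 <= y] = 1%E) ->
  (forall x t, (\int[mu x t]_y (y%:E) = 1)%E) ->
  (forall x t, (\int[mu x t]_y ((y ^+ p)%:E) < +oo)%E) ->
  exists M : X -> R, (forall x, 0 < M x) /\
  forall (N : nat) (alpha : R), 0 < alpha ->
    alpha * T%:R + 2^-1 + Num.sqrt (alpha * T%:R) <= N%:R ->
  forall (dO : measure_display) (Omega : measurableType dO)
    (P : X -> probability Omega R) (W : X -> 'I_T -> 'I_N -> Omega -> R),
    (forall x t i, measurable_fun setT (W x t i)) ->
    (forall x, mutually_independent (P x)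
                 (fun ti : 'I_T * 'I_N => W x ti.1 ti.2)) ->
    (forall x t i, has_law (P x) (W x t i) (mu x t)) ->
  forall s : R, 0 < s ->
    (\int[pi]_x tilted_tail (P x) (Wprod (W x)) s
     <= (s ^- (p - 1))%:E * \int[pi]_x (expR (M x / alpha))%:E)%E.
Proof.
move=> T_gt0 p_ge2 mu_ge0 mu_mean mu_moment.
pose B x := 1 + \sum_t abs_moment (mu x t) p.
have B_ge x t : 1 + abs_moment (mu x t) p <= B x.
  rewrite lerD2l (bigD1 t) //= lerDl.
  by apply: sumr_ge0 => ? _; exact: abs_moment_ge0.
have B_ge1 x : 1 <= B x.
  by rewrite lerDl; apply: sumr_ge0 => t _; exact: abs_moment_ge0.
exists (fun x => B x ^+ p * p%:R ^+ 2); split.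
  move=> x; apply: mulr_gt0; apply: exprn_gt0.
    exact: lt_le_trans ltr01 (B_ge1 x).
  by rewrite ltr0n (leq_trans _ p_ge2).
move=> N alpha alpha_gt0 N_ge dO Omega P W mW indW lawW s s_gt0.
have aTN : alpha * T%:R <= N%:R.
  by apply: le_trans N_ge; rewrite -addrA lerDl addr_ge0 ?sqrtr_ge0.
have N_gt0 : (0 < N)%N.
  by rewrite -(ltr0n R); apply: lt_le_trans aTN; rewrite mulr_gt0 ?ltr0n.
apply: ge0_le_integralZl_nonmeasurable => [|x|x|x].
- by rewrite invr_gt0 exprn_gt0.
- by apply: integral_ge0 => w /= sw; rewrite lee_fin (le_trans (ltW s_gt0) sw).
- by rewrite lee_fin expR_ge0.
have W_moment t i m : (m <= p)%N ->
    (\int[P x]_w (`|W x t i w| ^+ m)%:E = (abs_moment (mu x t) m)%:E)%E.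
  move=> m_le.
  rewrite (integral_has_law _ (mW x t i) (lawW x t i) (measurable_normrX _ _)) //.
  exact: (integral_abs_moment (mu_ge0 x t) (mu_moment x t)).
have c_bound t m : (m <= p)%N -> 0 <= abs_moment (mu x t) m <= B x ^+ m.
  move=> m_le; rewrite abs_moment_ge0 /=.
  exact (abs_moment_le_exprn (mu_ge0 x t) (mu_moment x t) _ _ (B_ge x t) m_le).
have := tilted_tail_Wprod_le (mW x) (indW x) W_moment (B_ge1 x)
  (fun t => abs_moment0) (fun t => abs_moment1 (mu_ge0 x t) (mu_mean x t))
  c_bound s (ltnW p_ge2) N_gt0 s_gt0.
move/le_trans; apply; rewrite subn1; apply: lee_wpmul2l.
  by rewrite lee_fin invr_ge0 exprn_ge0 ?ltW.
rewrite lee_fin exprn_1Ddiv_le_expR // mulr_ge0 ?exprn_ge0 //.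
exact: le_trans ler01 (B_ge1 x).
Qed.
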